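(* Let $\mathcal{A}$ be a finite or countable alphabet, $\mathcal{M}$ a countable set of probability measures on $\mathcal{A}^\infty$, $w:\mathcal{M}\to(0,1]$ a prior with $\sum_\nu w_\nu=1$, $\xi$ the Bayes mixture and $\mu\in\mathcal{M}$. For every $n\in\mathbb{N}$, both $\mathbb{E}_\mu\ln(\mu_{<n}/\xi_{<n})$ and $\mathbb{E}_\mu d_n$ exist and are finite.
   Context: $\mathcal{A}^\infty$ carries the $\sigma$-algebra generated by cylinders $\Gamma_x=\{x\omega\}$; for a measure $\rho$, $\rho(x):=\rho(\Gamma_x)$, $\rho(y|x):=\rho(xy)/\rho(x)$, and $\rho_{<t}(\omega):=\rho(\omega_{<t})$ with $\omega_{<t}=\omega_1\cdots\omega_{t-1}$. Bayes mixture $\xi(A):=\sum_\nu w_\nu\nu(A)$. Natural logs. $d_n(\omega):=\sum_{a\in\mathcal{A}}\mu(a|\omega_{<n})\ln\frac{\mu(a|\omega_{<n})}{\xi(a|\omega_{<n})}$. *)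

From HB Require Import structures.
From mathcomp Require Import all_boot all_order all_algebra.
From mathcomp Require Import all_classical all_reals all_analysis.
Set Implicit Arguments. Unset Strict Implicit. Unset Printing Implicit Defensive.
Import Order.TTheory GRing.Theory Num.Theory.
Local Open Scope classical_set_scope.
Local Open Scope ring_scope.

(* Infinite sequences over A: omega : nat -> A, omega 0 is the first letter
   (the paper's omega_1). *)

(* the prefix omega_{<t} = omega_1 ... omega_{t-1}, a word of length t-1 *)
Definition pre (A : Type) (t : nat) (omega : nat -> A) : seq A :=
  mkseq omega t.-1.

Definition cyl (A : Type) (x : seq A) : set (nat -> A) :=
  [set omega | mkseq omega (size x) = x].

Definition cylinders (A : pointedType) : set (set (nat -> A)) := [set cyl x | x in [set: seq A]].
Definition seqspace (A : pointedType) := g_sigma_algebraType (@cylinders A).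

Section Defs.
Context {R : realType} {A : pointedType}.
Local Notation Omega := (seqspace A).

Definition cylm (rho : set Omega -> \bar R) (x : seq A) : R := fine (rho (cyl x)).

Definition condp (rho : set Omega -> \bar R) (y x : seq A) : R :=
  cylm rho (x ++ y) / cylm rho x.

Definition mixture (M : set (probability Omega R)) (w : probability Omega R -> R)
  (B : set Omega) : \bar R :=
  (\esum_(nu in M) ((w nu)%:E * (nu : set Omega -> \bar R) B))%E.

Definition logratio (mu xi : set Omega -> \bar R) (n : nat) (omega : Omega) : R :=
  ln (cylm mu (pre n omega) / cylm xi (pre n omega)).

Definition dterm (mu xi : set Omega -> \bar R) (n : nat) (omega : Omega) (a : A) : R :=
  condp mu [:: a] (pre n omega) *
  ln (condp mu [:: a] (pre n omega) / condp xi [:: a] (pre n omega)).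

(* d_n(omega) := sum_{a in A} dterm a, the (unconditional) sum over the
   countable alphabet, i.e. sum of positive parts minus sum of negative parts *)
Definition d_n (mu xi : set Omega -> \bar R) (n : nat) (omega : Omega) : \bar R :=
  (\esum_(a in [set: A]) (Num.max (dterm mu xi n omega a) 0)%:E
   - \esum_(a in [set: A]) (Num.max (- dterm mu xi n omega a) 0)%:E)%E.

End Defs.

From HB Require Import structures.
From mathcomp Require Import all_boot all_order all_algebra.
From mathcomp Require Import all_classical all_reals all_analysis.
From mathcomp Require Import measurable_realfun.
From mathcomp.algebra_tactics Require Import ring lra.
Set Implicit Arguments. Unset Strict Implicit. Unset Printing Implicit Defensive.
Import Order.TTheory GRing.Theory Num.Theory.
Local Open Scope classical_set_scope.
Local Open Scope ring_scope.

(* Both integrands are functions of the first n-1 letters, so their integrals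
   are sums over the countably many cylinders x of that length.  The mixture
   dominates its components, xi >= w_mu mu, which gives on each cylinder
     |ln (mu(x) / xi(x))| mu(x) <= - ln w_mu mu(x) + xi(x)
   and, bounding the positive and negative parts of d_n with ln y < y,
     |d_n| mu(x) <= mu(x) + xi(x) / w_mu.
   Summing over disjoint cylinders, mu and xi have total mass at most 1. *)

Lemma esumZl (R : realType) (I : choiceType) (D : set I) (a : I -> \bar R) (c : R) :
  0 <= c -> (forall i, 0 <= a i)%E ->
  (\esum_(i in D) (c%:E * a i) = c%:E * \esum_(i in D) a i)%E.
Proof.
move=> c0 a0; rewrite /esum -ereal_supZl//; last first.
  by apply/set0P; exists 0%E, set0; [exact: fsets_set0|rewrite fsbig_set0].
congr ereal_sup; apply/seteqP; split=> _ [X DX <-].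
  by exists (\sum_(i \in X) a i)%E; [exists X|rewrite ge0_mule_fsumr].
by case: DX => Y DY <-; exists Y => //; rewrite ge0_mule_fsumr.
Qed.

Section superadditive.
Context {d : measure_display} {T : measurableType d} {R : realType}.

(* Weaker than sigma-additivity, but preserved by the sum defining the Bayes
   mixture and sufficient for the bounds below. *)
Definition sigma_superadditive (h : set T -> \bar R) :=
  forall (I : choiceType) (D : set I) (F : I -> set T) (G : set T),
  (forall i, D i -> measurable (F i)) -> trivIset D F ->
  (forall i, D i -> F i `<=` G) -> measurable G ->
  (\esum_(i in D) h (F i) <= h G)%E.

Lemma measure_sigma_superadditive (mu : {measure set T -> \bar R}) :
  sigma_superadditive mu.
Proof.
move=> I D F G mF tF FG mG; apply: ge_ereal_sup => _ [X [fX XD] <-].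
have mX i : X i -> measurable (F i) by move=> /XD /mF.
rewrite -measure_fsbig//; last exact: sub_trivIset tF.
apply: le_measure; rewrite ?inE//.
  rewrite fsbig_finite// big_seq; apply: bigsetU_measurable => i.
  by rewrite in_fset_set// inE => /mX.
rewrite fsbig_finite// => t; rewrite -bigcup_seq => -[i /=].
by rewrite in_fset_set// inE => /XD Di /(FG _ Di).
Qed.

Lemma sigma_superadditiveD (h1 h2 : set T -> \bar R) :
  (forall B, 0 <= h1 B)%E -> (forall B, 0 <= h2 B)%E ->
  sigma_superadditive h1 -> sigma_superadditive h2 ->
  sigma_superadditive (fun B => h1 B + h2 B)%E.
Proof.
move=> h10 h20 s1 s2 I D F G mF tF FG mG.
by rewrite esumD//; apply: leeD; [exact: s1|exact: s2].
Qed.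

Lemma sigma_superadditiveZ (c : R) (h : set T -> \bar R) : 0 <= c ->
  (forall B, 0 <= h B)%E -> sigma_superadditive h ->
  sigma_superadditive (fun B => c%:E * h B)%E.
Proof.
move=> c0 h0 sh I D F G mF tF FG mG.
by rewrite esumZl//; apply: lee_wpmul2l; [rewrite lee_fin|exact: sh].
Qed.

End superadditive.

Section cylinders.
Context {A : pointedType}.
Local Notation Omega := (seqspace A).

Lemma measurable_cyl (x : seq A) : measurable (cyl x : set Omega).
Proof. by apply: sub_sigma_algebra; exists x. Qed.

Lemma cyl_rcons_sub (x : seq A) a : (cyl (x ++ [:: a]) : set Omega) `<=` cyl x.
Proof.
by move=> om; rewrite /cyl /= size_cat addn1 mkseqS cats1 => /rcons_inj [].
Qed.

Lemma trivIset_cyl_rcons (x : seq A) :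
  trivIset setT (fun a => (cyl (x ++ [:: a]) : set Omega)).
Proof.
move=> a b _ _ [om [/=]]; rewrite /cyl /= !size_cat /= => -> /eqP.
by rewrite !cats1 eqseq_rcons eqxx => /eqP.
Qed.

Lemma esum_cyl_rcons_le {R : realType} (h : set Omega -> \bar R) (x : seq A) :
  sigma_superadditive h -> (\esum_(a in [set: A]) h (cyl (x ++ [:: a])) <= h (cyl x))%E.
Proof.
move=> sh; apply: sh; [by move=> a _; exact: measurable_cyl|exact: trivIset_cyl_rcons|
  by move=> a _; exact: cyl_rcons_sub|exact: measurable_cyl].
Qed.

(* Coding words by natural numbers indexes the cylinders of a given length by
   nat; codes of no word give empty classes. *)
Variables (f : A -> nat) (f_inj : injective f).

Definition prefix_class (k n : nat) : set Omega :=
  [set om | pickle (map f (mkseq om k)) = n].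

Lemma prefix_classP k n :
  (exists2 x, size x = k & prefix_class k n = cyl x) \/ prefix_class k n = set0.
Proof.
have code_inj : injective (fun x : seq A => pickle (map f x)).
  by move=> x y /(pcan_inj pickleK) /(inj_map f_inj).
have [[x [sx xn]]|nx] := pselect (exists x, size x = k /\ pickle (map f x) = n).
  left; exists x => //; apply/seteqP; split => om /=.
    by rewrite /prefix_class /cyl /= -xn sx => /code_inj.
  by rewrite /prefix_class /cyl /= sx => ->.
right; apply/seteqP; split => om //= omn; apply: nx; exists (mkseq om k).
by rewrite size_mkseq.
Qed.

Lemma measurable_prefix_class k n : measurable (prefix_class k n).
Proof. by case: (prefix_classP k n) => [[x _ ->]|->]; [exact: measurable_cyl|]. Qed.

Lemma trivIset_prefix_class k : trivIset setT (prefix_class k).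
Proof. by move=> i j _ _ [om [/= <- <-]]. Qed.

Lemma bigcup_prefix_class k : \bigcup_n prefix_class k n = setT.
Proof. by apply/seteqP; split => // om _; exists (pickle (map f (mkseq om k))). Qed.

Lemma measurable_fun_prefix d' (T : measurableType d') (G : seq A -> T) k :
  measurable_fun setT (fun om : Omega => G (mkseq om k)).
Proof.
rewrite -(bigcup_prefix_class k); apply/measurable_fun_bigcup => n.
  exact: measurable_prefix_class.
case: (prefix_classP k n) => [[x sx ->]|->]; last exact: measurable_fun_set0.
apply: (@eq_measurable_fun _ _ _ _ _ (cst (G x))); last exact: measurable_cst.
by move=> om; rewrite inE /cyl /= sx => ->.
Qed.

Lemma integrable_prefix {R : realType} (mu : {measure set Omega -> \bar R})
    (h : set Omega -> \bar R) (G : seq A -> \bar R) k :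
  (forall B, 0 <= h B)%E -> sigma_superadditive h -> (h setT < +oo)%E ->
  (forall x, size x = k -> `|G x| * mu (cyl x) <= h (cyl x))%E ->
  mu.-integrable setT (fun om => G (mkseq om k)).
Proof.
move=> h0 sh hT hG; apply/integrableP; split; first exact: measurable_fun_prefix.
rewrite -(bigcup_prefix_class k) ge0_integral_bigcup //; last first.
- exact: trivIset_prefix_class.
- by rewrite bigcup_prefix_class; exact: (measurable_fun_prefix (fun x => `|G x|)%E).
- exact: measurable_prefix_class.
apply: (@le_lt_trans _ _ (\sum_(n <oo) h (prefix_class k n))%E); last first.
  rewrite nneseries_esumT//; apply: le_lt_trans hT; apply: sh => //.
  + by move=> n _; exact: measurable_prefix_class.
  + exact: trivIset_prefix_class.
apply: lee_nneseries => [n _ _|n _]; first exact: integral_ge0.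
case: (prefix_classP k n) => [[x sx ->]|->]; last by rewrite integral_set0.
rewrite (eq_integral (cst `|G x|%E)); last by move=> om; rewrite inE /cyl /= sx => ->.
by rewrite integral_cst ?hG//; exact: measurable_cyl.
Qed.

End cylinders.

Section mixture.
Context {R : realType} {A : pointedType}.
Variables (M : set (probability (seqspace A) R)) (w : probability (seqspace A) R -> R).
Hypothesis w_ge0 : forall nu, M nu -> 0 <= w nu.

Lemma mixture_ge0 B : (0 <= mixture M w B)%E.
Proof. by apply: esum_ge0 => nu Mnu; rewrite mule_ge0 ?lee_fin ?w_ge0. Qed.

Lemma mixture_ge mu B : M mu -> ((w mu)%:E * mu B <= mixture M w B)%E.
Proof.
move=> Mmu; apply: esum_ge; exists [set mu]; last by rewrite fsbig_set1.
by split; [exact: finite_set1|move=> ? ->].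
Qed.

Lemma mixture_fin_num B : (\esum_(nu in M) (w nu)%:E = 1)%E -> measurable B ->
  mixture M w B \is a fin_num.
Proof.
move=> w1 mB; rewrite ge0_fin_numE ?mixture_ge0//; apply: le_lt_trans (ltey 1).
rewrite -w1; apply: le_esum => nu Mnu.
by rewrite -[leRHS]mule1 lee_wpmul2l ?lee_fin ?w_ge0 ?probability_le1.
Qed.

Lemma mixture_sigma_superadditive : sigma_superadditive (mixture M w).
Proof.
move=> I D F G mF tF FG mG; apply: ge_ereal_sup => _ [X [fX XD] <-].
rewrite /mixture fsbig_finite//= -esum_sum; last first.
  by move=> nu i Mnu _; rewrite mule_ge0 ?lee_fin ?w_ge0.
apply: le_esum => nu Mnu; rewrite -ge0_sume_distrr// lee_wpmul2l ?lee_fin ?w_ge0//.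
rewrite -fsbig_finite// -esum_fset//; apply: measure_sigma_superadditive => //.
- by move=> i /XD /mF.
- exact: sub_trivIset tF.
- by move=> i /XD /FG.
Qed.

End mixture.

Section xlnx_bounds.
Context {R : realType}.

(* If m <= s, use ln y < y at y = s / m; if s < m, then ln (m / s) <= - ln c. *)
Lemma abs_ln_ratio_mul_le (m s c : R) : 0 <= m -> 0 < c -> c <= 1 -> c * m <= s ->
  `|ln (m / s)| * m <= - ln c * m + s.
Proof.
move=> m0 c0 c1 cms.
have lnc : ln c <= 0 by exact: ln_le0.
have [m_eq0|m_neq0] := eqVneq m 0.
  by move: cms; rewrite m_eq0 !mulr0 add0r.
have m_gt0 : 0 < m by rewrite lt_neqAle eq_sym m_neq0.
have s_gt0 : 0 < s by apply: lt_le_trans cms; exact: mulr_gt0.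
have [ms|sm] := leP m s.
  rewrite ler0_norm; last by rewrite ln_le0// ler_pdivrMr// mul1r.
  have -> : - ln (m / s) = ln (s / m) by rewrite -lnV ?invf_div// posrE divr_gt0.
  have : ln (s / m) * m <= s / m * m by rewrite ler_pM2r// ltW// ln_sublinear// divr_gt0.
  by rewrite divfK ?gt_eqF// => ln_sm_le; nra.
rewrite ger0_norm; last by rewrite ln_ge0// ler_pdivlMr// mul1r ltW.
have : ln (m / s) <= - ln c.
  rewrite -lnV ?posrE// ler_ln ?posrE ?invr_gt0 ?divr_gt0//.
  by rewrite ler_pdivrMr// mulrC ler_pdivlMr// mulrC.
by move=> ln_ms_le; nra.
Qed.

Lemma neg_xln_ratio_le (p q : R) : 0 <= p -> 0 <= q -> (0 < p -> 0 < q) ->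
  Num.max (- (p * ln (p / q))) 0 <= q.
Proof.
move=> p0 q0 pq; have [->|p_neq0] := eqVneq p 0; first by rewrite mul0r oppr0 maxxx.
have p_gt0 : 0 < p by rewrite lt_neqAle eq_sym p_neq0.
have q_gt0 := pq p_gt0.
rewrite ge_max q0 andbT -mulrN -lnV ?posrE ?divr_gt0// invf_div.
have : p * ln (q / p) <= p * (q / p).
  by rewrite ler_pM2l// ltW// ln_sublinear// divr_gt0.
by rewrite [p * (q / p)]mulrC divfK ?gt_eqF.
Qed.

Lemma pos_xln_ratio_le (p q K : R) : 0 <= p -> 0 < K -> (0 < p -> 0 < q /\ p / q <= K) ->
  Num.max (p * ln (p / q)) 0 <= p * K.
Proof.
move=> p0 K0 pq; have [->|p_neq0] := eqVneq p 0; first by rewrite !mul0r maxxx.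
have p_gt0 : 0 < p by rewrite lt_neqAle eq_sym p_neq0.
have [q_gt0 pqK] := pq p_gt0.
rewrite ge_max (mulr_ge0 p0 (ltW K0)) andbT ler_pM2l//.
apply: (@le_trans _ _ (ln K)); first by rewrite ler_ln ?posrE ?divr_gt0.
exact/ltW/ln_sublinear.
Qed.

End xlnx_bounds.

Section condp.
Context {R : realType} {A : pointedType}.
Variable rho : set (seqspace A) -> \bar R.
Hypotheses (rho_ge0 : forall B, (0 <= rho B)%E)
  (rho_cyl_fin : forall x, rho (cyl x) \is a fin_num).

Lemma cylm_ge0 x : 0 <= cylm rho x.
Proof. exact: fine_ge0. Qed.

Lemma condp_ge0 y x : 0 <= condp rho y x.
Proof. by rewrite divr_ge0 ?cylm_ge0. Qed.

Lemma esum_condp_le1 x : sigma_superadditive rho -> 0 < cylm rho x ->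
  (\esum_(a in [set: A]) (condp rho [:: a] x)%:E <= 1)%E.
Proof.
move=> s_rho x_gt0.
under eq_esum do rewrite /condp mulrC EFinM /cylm fineK//.
rewrite esumZl ?invr_ge0 ?cylm_ge0//.
rewrite -(mulVf (lt0r_neq0 x_gt0)) EFinM lee_wpmul2l ?lee_fin ?invr_ge0 ?cylm_ge0//.
by rewrite /cylm fineK//; exact: esum_cyl_rcons_le.
Qed.

End condp.

Section mixture_integrability.
Context {R : realType} {A : pointedType}.
Local Notation Omega := (seqspace A).
Variables (f : A -> nat) (f_inj : injective f).
Variables (M : set (probability Omega R)) (w : probability Omega R -> R).
Hypotheses (w_ge0 : forall nu, M nu -> 0 <= w nu)
  (w_sum1 : (\esum_(nu in M) (w nu)%:E = 1)%E).
Variable mu : probability Omega R.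
Hypotheses (M_mu : M mu) (w_mu_gt0 : 0 < w mu) (w_mu_le1 : w mu <= 1).
Local Notation xi := (mixture M w).
Local Notation c := (w mu).

Lemma mixture_cyl_fin_num x : xi (cyl x) \is a fin_num.
Proof. exact: (mixture_fin_num w_ge0 w_sum1 (measurable_cyl x)). Qed.

Lemma measure_cylE x : mu (cyl x) = (cylm mu x)%:E.
Proof. by rewrite fineK// fin_num_measure//; exact: measurable_cyl. Qed.

Lemma mixture_cylE x : xi (cyl x) = (cylm xi x)%:E.
Proof. by rewrite fineK// mixture_cyl_fin_num. Qed.

Lemma integrable_prefix_dominated (a b : R) (G : seq A -> \bar R) k :
  0 <= a -> 0 <= b ->
  (forall x, size x = k ->
     `|G x| * mu (cyl x) <= a%:E * mu (cyl x) + b%:E * xi (cyl x))%E ->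
  mu.-integrable setT (fun om => G (mkseq om k)).
Proof.
move=> a0 b0.
have mu_ge0 B : (0 <= a%:E * mu B)%E by rewrite mule_ge0 ?lee_fin.
have xi_ge0 B : (0 <= b%:E * xi B)%E by rewrite mule_ge0 ?lee_fin ?mixture_ge0.
apply: (integrable_prefix f_inj (h := fun B => a%:E * mu B + b%:E * xi B)%E) => //.
- by move=> B; rewrite adde_ge0.
- apply: sigma_superadditiveD => //; apply: sigma_superadditiveZ => //.
  + exact: measure_sigma_superadditive.
  + exact: mixture_ge0.
  + exact: mixture_sigma_superadditive.
- rewrite probability_setT mule1 -(fineK (mixture_fin_num w_ge0 w_sum1 measurableT)).
  by rewrite -EFinM -EFinD ltry.
Qed.

Lemma cylm_mixture_ge x : c * cylm mu x <= cylm xi x.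
Proof. by rewrite -lee_fin EFinM -measure_cylE -mixture_cylE mixture_ge. Qed.

Lemma integrable_logratio n :
  mu.-integrable setT (fun om => (logratio mu xi n om)%:E).
Proof.
apply: (@integrable_prefix_dominated (- ln c) 1
  (fun x => (ln (cylm mu x / cylm xi x))%:E) n.-1).
- by rewrite oppr_ge0 ln_le0.
- by [].
- move=> x _; rewrite mul1e measure_cylE mixture_cylE abse_EFin -!EFinM -EFinD lee_fin.
  by rewrite abs_ln_ratio_mul_le ?cylm_ge0 ?cylm_mixture_ge.
Qed.

Let kl x a := condp mu [:: a] x * ln (condp mu [:: a] x / condp xi [:: a] x).

Section kl_summand.
Variable x : seq A.
Hypothesis mu_x_gt0 : 0 < cylm mu x.

Let p a := condp mu [:: a] x.
Let q a := condp xi [:: a] x.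
Let K := cylm xi x / (c * cylm mu x).

Lemma cylm_mixture_gt0 : 0 < cylm xi x.
Proof. by apply: lt_le_trans (cylm_mixture_ge x); exact: mulr_gt0. Qed.

Lemma condp_mixture_gt0 a : 0 < p a -> 0 < q a.
Proof.
rewrite /p /q /condp pmulr_lgt0 ?invr_gt0// => u_gt0.
rewrite divr_gt0 ?cylm_mixture_gt0//.
by apply: lt_le_trans (cylm_mixture_ge _); exact: mulr_gt0.
Qed.

Lemma condp_ratio_le a : 0 < p a -> p a / q a <= K.
Proof.
rewrite /p /q /K /condp pmulr_lgt0 ?invr_gt0// => u_gt0.
set u := cylm mu _; set v := cylm xi _; set m := cylm mu x; set s := cylm xi x.
have cuv : c * u <= v := cylm_mixture_ge _.
have v_gt0 : 0 < v by apply: lt_le_trans cuv; exact: mulr_gt0.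
have s_gt0 : 0 < s := cylm_mixture_gt0.
have -> : u / m / (v / s) = u / v * (s / m) by field; rewrite ?gt_eqF.
have -> : s / (c * m) = c^-1 * (s / m) by field; rewrite ?gt_eqF.
by rewrite ler_pM2r ?divr_gt0// ler_pdivrMr// mulrC ler_pdivlMr// mulrC.
Qed.

Lemma esum_neg_part_le1 :
  (\esum_(a in [set: A]) (Num.max (- kl x a) 0)%:E <= 1)%E.
Proof.
apply: le_trans (esum_condp_le1 (mixture_ge0 w_ge0) mixture_cyl_fin_num
  (mixture_sigma_superadditive w_ge0) cylm_mixture_gt0).
apply: le_esum => a _; rewrite lee_fin neg_xln_ratio_le ?condp_ge0//.
- exact: mixture_ge0.
- exact: condp_mixture_gt0.
Qed.

Lemma esum_pos_part_le :
  (\esum_(a in [set: A]) (Num.max (kl x a) 0)%:E <= K%:E)%E.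
Proof.
have K_gt0 : 0 < K by rewrite divr_gt0 ?mulr_gt0 ?cylm_mixture_gt0.
apply: (@le_trans _ _ (\esum_(a in [set: A]) (K%:E * (p a)%:E))%E).
  apply: le_esum => a _.
  rewrite -EFinM lee_fin [leRHS]mulrC pos_xln_ratio_le ?condp_ge0//.
  by move=> pa_gt0; rewrite condp_mixture_gt0 ?condp_ratio_le.
rewrite (esumZl _ (ltW K_gt0)) => [|a]; last by rewrite lee_fin condp_ge0.
rewrite -[leRHS]mule1 lee_wpmul2l ?lee_fin ?(ltW K_gt0)//.
apply: esum_condp_le1 mu_x_gt0 => [//|y|]; last exact: measure_sigma_superadditive.
by rewrite fin_num_measure//; exact: measurable_cyl.
Qed.

End kl_summand.

Lemma integrable_d_n n : mu.-integrable setT (d_n mu xi n).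
Proof.
apply: (@integrable_prefix_dominated 1 c^-1 (fun x =>
    \esum_(a in [set: A]) (Num.max (kl x a) 0)%:E -
    \esum_(a in [set: A]) (Num.max (- kl x a) 0)%:E)%E n.-1) => // [|x _ /=].
  by rewrite invr_ge0 ltW.
set P := esum _ _; set N := esum _ _.
have P_ge0 : (0 <= P)%E by apply: esum_ge0 => a _; rewrite lee_fin le_max lexx orbT.
have N_ge0 : (0 <= N)%E by apply: esum_ge0 => a _; rewrite lee_fin le_max lexx orbT.
have : 0 <= cylm mu x by exact: cylm_ge0.
rewrite le_eqVlt => /predU1P[m_eq0|m_gt0].
  rewrite measure_cylE -m_eq0 !mule0 add0e mule_ge0 ?mixture_ge0// lee_fin invr_ge0.
  exact: ltW.
apply: (@le_trans _ _ ((P + N) * mu (cyl x))%E).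
  apply: lee_wpmul2r => //; apply: le_trans (lee_abs_sub _ _) _.
  by rewrite !gee0_abs.
rewrite ge0_muleDl// addeC mul1e; apply: leeD.
  by rewrite -[leRHS]mul1e; apply: lee_wpmul2r => //; exact: esum_neg_part_le1.
rewrite measure_cylE mixture_cylE.
apply: le_trans (lee_wpmul2r _ (esum_pos_part_le m_gt0)) _.
  by rewrite lee_fin cylm_ge0.
rewrite -!EFinM lee_fin.
by have -> : cylm xi x / (c * cylm mu x) * cylm mu x = c^-1 * cylm xi x
  by field; rewrite ?gt_eqF.
Qed.

End mixture_integrability.

Theorem lemma4 (R : realType) (A : pointedType)
  (hA : countable [set: A])
  (M : set (probability (seqspace A) R)) (hM : countable M)
  (w : probability (seqspace A) R -> R)
  (hw : forall nu, M nu -> 0 < w nu <= 1)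
  (hw1 : (\esum_(nu in M) (w nu)%:E = 1)%E)
  (mu : probability (seqspace A) R) (hmu : M mu) :
  let xi := mixture M w in
  forall n : nat,
    mu.-integrable setT (fun omega => (logratio mu xi n omega)%:E) /\
    mu.-integrable setT (d_n mu xi n).
Proof.
move=> xi n; have /countable_injP [f f_inj] := hA.
have {}f_inj : injective f by move=> a b; apply: f_inj; rewrite inE.
have w_ge0 nu : M nu -> 0 <= w nu by move=> /hw /andP [/ltW].
have /andP [w_mu_gt0 w_mu_le1] := hw mu hmu.
split.
- exact: (integrable_logratio f_inj w_ge0 hw1 hmu w_mu_gt0 w_mu_le1).
- exact: (integrable_d_n f_inj w_ge0 hw1 hmu w_mu_gt0).
Qed.
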